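(* Let $R$ be a mixed characteristic dp-minimal DVR and let $S$ be a finite-index subring of $R$. Then $S$ is dp-minimal and Noetherian.
   Context: Rings are commutative and unital; a ring is dp-minimal if $(R,+,\cdot)$ has dp-rank $1$. A DVR is a discrete valuation ring; a dp-minimal DVR has fraction field of characteristic $0$, and it is called mixed characteristic if its residue field is finite. A finite-index subring of $R$ is a subring $S\subseteq R$ of finite index in the additive group $(R,+)$. *)

From HB Require Import structures.
From mathcomp Require Import all_boot all_order all_algebra.
Set Implicit Arguments. Unset Strict Implicit. Unset Printing Implicit Defensive.
Import GRing.Theory.
Local Open Scope ring_scope.

Inductive rterm : Type :=
  | TVar of nat
  | TZero | TOne
  | TAdd of rterm & rterm
  | TMul of rterm & rterm
  | TOpp of rterm.

Inductive rform : Type :=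
  | FEq of rterm & rterm
  | FNot of rform
  | FAnd of rform & rform
  | FEx of nat & rform.

Section Semantics.
Variable R : comPzRingType.

Fixpoint teval (e : nat -> R) (t : rterm) : R :=
  match t with
  | TVar n => e n
  | TZero => 0
  | TOne => 1
  | TAdd t1 t2 => teval e t1 + teval e t2
  | TMul t1 t2 => teval e t1 * teval e t2
  | TOpp t1 => - teval e t1
  end.

Definition upd (e : nat -> R) (n : nat) (a : R) : nat -> R :=
  fun k => if k == n then a else e k.

(** Satisfaction in the substructure with universe [D] (quantifiers range
    over [D]); for [D] a subring this is satisfaction in the ring (D,+,.). *)
Fixpoint sat (D : R -> Prop) (e : nat -> R) (f : rform) : Prop :=
  match f with
  | FEq t1 t2 => teval e t1 = teval e t2
  | FNot g => ~ sat D e g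
  | FAnd g h => sat D e g /\ sat D e h
  | FEx n g => exists a, D a /\ sat D (upd e n a) g
  end.

(** dp-minimality of the structure (D,+,.): there is no ICT pattern of depth 2
    in one variable.  By compactness (and elementarity of the structure in its
    monster model) this is equivalent to: there are no formulas phi(x;y),
    psi(x;z) (x = variable 0, the other variables being parameters) admitting
    arbitrarily large finite ICT patterns with parameters from D. *)
Definition dp_minimal (D : R -> Prop) : Prop :=
  ~ exists phi psi : rform,
      forall n : nat,
      exists b c : nat -> nat -> R,
        (forall i k, D (b i k)) /\ (forall j k, D (c j k)) /\
        forall i j, (i < n)%N -> (j < n)%N ->
          exists a, D a /\
            forall k, (k < n)%N ->
              (sat D (upd (b k) 0 a) phi <-> k = i) /\
              (sat D (upd (c k) 0 a) psi <-> k = j).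

Definition is_subring (S : R -> Prop) : Prop :=
  [/\ S 1, (forall x y, S x -> S y -> S (x - y)) & (forall x y, S x -> S y -> S (x * y))].

Definition finite_index (S : R -> Prop) : Prop :=
  exists reps : seq R, forall r, exists2 c, c \in reps & S (r - c).

Definition is_ideal_of (S I : R -> Prop) : Prop :=
  [/\ forall x, I x -> S x, I 0, (forall x y, I x -> I y -> I (x + y))
    & (forall s x, S s -> I x -> I (s * x))].

Definition fg_ideal_of (S I : R -> Prop) : Prop :=
  exists g : seq R, (forall x, x \in g -> I x) /\
    forall x, I x -> exists c : nat -> R, (forall i, S (c i)) /\
       x = \sum_(i < size g) c i * g`_i.

Definition noetherian_sub (S : R -> Prop) : Prop :=
  forall I, is_ideal_of S I -> fg_ideal_of S I.

End Semantics.

Definition is_DVR (R : idomainType) : Prop :=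
  exists pi : R, pi != 0 /\ pi \isn't a GRing.unit /\
    forall x : R, x != 0 -> exists u n, u \is a GRing.unit /\ x = u * pi ^+ n.

(** Finite residue field: R modulo its maximal ideal (= the non-units of the
    local ring R) is finite. *)
Definition finite_residue_field (R : idomainType) : Prop :=
  exists reps : seq R, forall r, exists2 c, c \in reps & (r - c) \isn't a GRing.unit.

Definition mixed_char_dpmin_DVR (R : idomainType) : Prop :=
  [/\ is_DVR R, dp_minimal (fun _ : R => True) & finite_residue_field R].

From mathcomp Require Import all_boot all_order all_algebra.
From mathcomp Require Import zify ring.
From Stdlib Require Import Classical ClassicalEpsilon.
Set Implicit Arguments. Unset Strict Implicit. Unset Printing Implicit Defensive.
Import GRing.Theory.
Local Open Scope ring_scope.

(* Let pi be a uniformizer of R.  A pigeonhole argument on the classes modulo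
   S of the multiples of the powers of pi shows that S contains a nonzero ideal
   of R, hence pi^k R for some k.  Since R / pi^k R is finite, S is a finite
   union of cosets of pi^k R: it is definable in R with parameters, and
   relativizing formulas to this definition transfers dp-minimality from R to
   S.  Likewise a nonzero ideal I of S contains some pi^m R, so I is generated
   over S by finitely many representatives of I modulo pi^m R together with
   pi^m times representatives of R / S. *)

Lemma nat_pigeonhole (T : finType) (g : nat -> T) : exists i j, i <> j /\ g i = g j.
Proof.
apply: NNPP => g_inj.
have inj : injective (fun i : 'I_#|T|.+1 => g i).
  by move=> i j Eij; apply: val_inj; apply: NNPP => Nij; apply: g_inj; exists i, j.
by move: (leq_card _ inj); rewrite card_ord ltnn.
Qed.

Section Cosets.
Variable R : comPzRingType.

Definition in_cosets (a : R) (L : seq R) (x : R) : Prop :=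
  exists2 l, l \in L & exists y, x = l + a * y.

Definition finite_quotient (a : R) : Prop := exists L : seq R, forall x, in_cosets a L x.

Lemma in_cosets_cons a l L x :
  in_cosets a (l :: L) x <-> (exists y, x = l + a * y) \/ in_cosets a L x.
Proof.
split=> [[l' + Hx]|[Hx|[l' Hl' Hx]]].
- by rewrite inE => /orP[/eqP<-|Hl']; [left|right; exists l'].
- by exists l; rewrite ?mem_head.
- by exists l'; rewrite // inE Hl' orbT.
Qed.

Lemma finite_quotientM a b :
  finite_quotient a -> finite_quotient b -> finite_quotient (a * b).
Proof.
move=> [La Ha] [Lb Hb]; exists [seq l + a * m | l <- La, m <- Lb] => x.
have [l lLa [y ->]] := Ha x; have [m mLb [z ->]] := Hb y.
by exists (l + a * m); [exact: allpairs_f | exists z; ring].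
Qed.

Lemma finite_quotientX a n : finite_quotient a -> finite_quotient (a ^+ n).
Proof.
move=> Ha; elim: n => [|n IHn]; last by rewrite exprS; apply: finite_quotientM.
by exists [:: 0] => x; exists 0; rewrite ?mem_head //; exists x; rewrite expr0 add0r mul1r.
Qed.

Lemma in_cosets_reps (P : R -> Prop) a : finite_quotient a ->
  exists2 M : seq R, (forall m, m \in M -> P m) & (forall x, P x -> in_cosets a M x).
Proof.
move=> [L HL].
suff [M MP HM] : exists2 M : seq R, (forall m, m \in M -> P m) &
    (forall x, P x -> in_cosets a L x -> in_cosets a M x).
  by exists M => // x Px; apply: HM (HL x).
elim: L {HL} => [|l L [M MP HM]]; first by exists [::] => // x _ [].
have [[w [Pw [z Ew]]]|noP] := classic (exists w, P w /\ exists z, w = l + a * z).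
- exists (w :: M) => [m|x Px /in_cosets_cons [[y ->]|HL]].
  + by rewrite inE => /orP[/eqP->|/MP].
  + by apply/in_cosets_cons; left; exists (y - z); rewrite Ew; ring.
  + by apply/in_cosets_cons; right; apply: HM.
- exists M => // x Px /in_cosets_cons [Hx|]; last exact: HM.
  by case: noP; exists x.
Qed.

End Cosets.

Section Subring.
Variable R : comPzRingType.
Variable S : R -> Prop.
Hypothesis HS : is_subring S.

Lemma subring1 : S 1. Proof. by case: HS. Qed.

Lemma subringB x y : S x -> S y -> S (x - y). Proof. by case: HS => _ + _; apply. Qed.

Lemma subringM x y : S x -> S y -> S (x * y). Proof. by case: HS => _ _; apply. Qed.

Lemma subring0 : S 0. Proof. by rewrite -(subrr 1); apply: subringB subring1 subring1. Qed.

Lemma subringN x : S x -> S (- x).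
Proof. by move=> Sx; rewrite -sub0r; apply: subringB subring0 Sx. Qed.

Lemma subringD x y : S x -> S y -> S (x + y).
Proof. by move=> Sx Sy; rewrite -[y]opprK; apply: subringB Sx (subringN Sy). Qed.

Lemma finite_index_classes : finite_index S ->
  exists (reps : seq R) (cls : R -> 'I_(size reps)), forall x, S (x - reps`_(cls x)).
Proof.
move=> [reps Hreps]; exists reps.
apply: (choice (fun x (i : 'I_(size reps)) => S (x - reps`_i))) => x.
have [c creps Sc] := Hreps x; have ci : (index c reps < size reps)%N by rewrite index_mem.
by exists (Ordinal ci); rewrite /= nth_index.
Qed.

Lemma conductor_neq0 (f : nat -> R) : injective f -> finite_index S ->
  exists2 z : R, z != 0 & forall r, S (z * r).
Proof.
move=> f_inj /finite_index_classes [reps [cls Hcls]].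
have cls_eq x y : cls x = cls y -> S (x - y).
  move=> Exy; have -> : x - y = (x - reps`_(cls x)) - (y - reps`_(cls y)) by rewrite Exy; ring.
  exact: subringB.
pose fp x := ([ffun i : 'I_(size reps) => cls (x * reps`_i)], cls x).
have [i [j [Nij [/ffunP Eij Ecls]]]] := nat_pigeonhole (fun n => fp (f n)).
exists (f i - f j); first by rewrite subr_eq0; apply/eqP => /f_inj.
move=> r; set c := reps`_(cls r).
have -> : (f i - f j) * r = (f i - f j) * (r - c) + (f i * c - f j * c) by ring.
apply: subringD; first exact: subringM (cls_eq _ _ Ecls) (Hcls r).
by apply: cls_eq; have := Eij (cls r); rewrite !ffunE.
Qed.

Definition span (g : seq R) (x : R) : Prop :=
  exists c : nat -> R, (forall i, S (c i)) /\ x = \sum_(i < size g) c i * g`_i.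

Lemma span_add g x y : span g x -> span g y -> span g (x + y).
Proof.
move=> [c [Sc ->]] [d [Sd ->]]; exists (fun i => c i + d i); split.
  by move=> i; apply: subringD.
by rewrite -big_split; apply: eq_bigr => i _; rewrite mulrDl.
Qed.

Lemma span_mul g s x : S s -> span g x -> span g (s * x).
Proof.
move=> Ss [c [Sc ->]]; exists (fun i => s * c i); split; first by move=> i; apply: subringM.
by rewrite mulr_sumr; apply: eq_bigr => i _; rewrite mulrA.
Qed.

Lemma span_mem g x : x \in g -> span g x.
Proof.
move=> xg; exists (fun i => (i == index x g)%:R); split.
  by move=> i; case: eqP => _; [apply: subring1 | apply: subring0].
have xi : (index x g < size g)%N by rewrite index_mem.
rewrite (bigD1 (Ordinal xi)) //= eqxx mul1r nth_index // big1 ?addr0 // => i Ni.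
by rewrite -val_eqE in Ni; rewrite (negbTE Ni) mul0r.
Qed.

Lemma fg_ideal_of0 I : (forall x, I x -> x = 0) -> fg_ideal_of S I.
Proof.
move=> I0; exists [::]; split=> // x /I0 ->.
by exists (fun=> 0); split; [move=> _; apply: subring0 | rewrite big_ord0].
Qed.

Lemma fg_ideal_of_contains_principal I q : finite_index S -> finite_quotient q ->
  (forall r, I (q * r)) -> fg_ideal_of S I.
Proof.
move=> [reps Hreps] Hq qI; have [M MI HM] := in_cosets_reps I Hq.
exists (M ++ [seq q * c | c <- 1 :: reps]); split.
  by move=> x; rewrite mem_cat => /orP[/MI|/mapP[c _ ->]].
move=> x /HM [m mM [y ->]]; have [c creps Sc] := Hreps y.
have -> : m + q * y = m + (q * c + (y - c) * (q * 1)) by ring.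
apply: span_add; first by apply: span_mem; rewrite mem_cat mM.
apply: span_add; first by apply: span_mem; rewrite mem_cat map_f ?orbT // inE creps orbT.
by apply: span_mul => //; apply: span_mem; rewrite mem_cat map_f ?orbT ?mem_head.
Qed.

End Subring.

Section Formulas.
Variable R : comPzRingType.

Definition FFalse : rform := FNot (FEq TZero TZero).

Definition FOr (f g : rform) : rform := FNot (FAnd (FNot f) (FNot g)).

Definition bigFOr (s : seq nat) (F : nat -> rform) : rform :=
  foldr (fun i f => FOr (F i) f) FFalse s.

Lemma sat_FOr (D : R -> Prop) e f g : sat D e (FOr f g) <-> sat D e f \/ sat D e g.
Proof. by split=> [/not_and_or [] /NNPP|[Hf [Nf _]|Hg [_ Ng]]]; auto. Qed.

Lemma sat_bigFOr (D : R -> Prop) e s F :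
  sat D e (bigFOr s F) <-> exists2 i, i \in s & sat D e (F i).
Proof.
elim: s => [|i s IHs]; first by split=> [/= /(_ erefl) | []].
rewrite sat_FOr IHs; split=> [[Hi|[j js Hj]]|[j]].
- by exists i; rewrite ?mem_head.
- by exists j; rewrite // inE js orbT.
- by rewrite inE => /orP[/eqP-> Hi|js Hj]; [left | right; exists j].
Qed.

End Formulas.

Section Relativization.
Variable R : comPzRingType.
Variables (p : R) (L : seq R) (S : R -> Prop).
Hypothesis S_cosets : forall x, S x <-> in_cosets p L x.
Let T := fun _ : R => True.

(* A formula over S is translated to one over R in which variable v becomes
   variable 2v, while the odd variables hold the parameters: 1 holds p, 2i+5
   holds L_i, and 3 is the bound variable of [in_coset_form]. *)
Definition coset_param (w : nat) : R := if w == 1%N then p else L`_((w - 5)./2).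

Definition params_ok (e : nat -> R) : Prop := forall w, odd w -> e w = coset_param w.

Definition in_coset_form (v i : nat) : rform :=
  FEx 3 (FEq (TVar v) (TAdd (TVar (i.*2 + 5)) (TMul (TVar 1) (TVar 3)))).

Definition in_cosets_form (v : nat) : rform := bigFOr (iota 0 (size L)) (in_coset_form v).

Lemma sat_in_cosets_form e v : params_ok e -> ~~ odd v ->
  sat T e (in_cosets_form v) <-> in_cosets p L (e v).
Proof.
move=> He ev; rewrite sat_bigFOr.
have sat_coset i : sat T e (in_coset_form v i) <-> exists y, e v = L`_i + p * y.
  have [Ev Ei] : (v == 3)%N = false /\ (i.*2 + 5 == 3)%N = false.
    by split; apply/eqP => E; [move: ev; rewrite E | lia].
  have e1 : e 1%N = p by rewrite He.
  have ei : e (i.*2 + 5)%N = L`_i.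
    rewrite He ?oddD ?odd_double // /coset_param ifF ?addnK ?doubleK //.
    by apply/eqP; lia.
  rewrite /= /upd Ev Ei eqxx e1 ei.
  by split=> [[y [_ ->]]|[y ->]]; exists y.
split=> [[i + /sat_coset Hi]|[l lL [y Ey]]].
  by rewrite mem_iota add0n => /andP[_ iL]; exists L`_i; rewrite ?mem_nth.
exists (index l L); first by rewrite mem_iota add0n index_mem lL.
by apply/sat_coset; exists y; rewrite nth_index.
Qed.

Fixpoint rel_term (t : rterm) : rterm :=
  match t with
  | TVar n => TVar n.*2
  | TZero => TZero
  | TOne => TOne
  | TAdd a b => TAdd (rel_term a) (rel_term b)
  | TMul a b => TMul (rel_term a) (rel_term b)
  | TOpp a => TOpp (rel_term a)
  end.

Fixpoint rel_form (f : rform) : rform :=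
  match f with
  | FEq a b => FEq (rel_term a) (rel_term b)
  | FNot g => FNot (rel_form g)
  | FAnd g h => FAnd (rel_form g) (rel_form h)
  | FEx n g => FEx n.*2 (FAnd (in_cosets_form n.*2) (rel_form g))
  end.

Definition encodes (e e' : nat -> R) : Prop := (forall v, e' v.*2 = e v) /\ params_ok e'.

Definition encoding (e : nat -> R) (w : nat) : R :=
  if odd w then coset_param w else e w./2.

Lemma encodes_encoding e : encodes e (encoding e).
Proof. by split=> [v|w ow]; rewrite /encoding ?odd_double ?doubleK ?ow. Qed.

Lemma encodes_upd e e' n a : encodes e e' -> encodes (upd e n a) (upd e' n.*2 a).
Proof.
move=> [Ev Ep]; split=> [v|w ow]; rewrite /upd.
  by rewrite (inj_eq (can_inj doubleK)) Ev.
by case: eqP => [E|_]; [move: ow; rewrite E odd_double | exact: Ep].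
Qed.

Lemma teval_rel_term (e e' : nat -> R) t :
  (forall v, e' v.*2 = e v) -> teval e' (rel_term t) = teval e t.
Proof. by move=> Ev; elim: t => //= [a -> b ->|a -> b ->|a ->]. Qed.

Lemma sat_rel_form f e e' : encodes e e' -> sat T e' (rel_form f) <-> sat S e f.
Proof.
elim: f e e' => [a b|g IHg|g IHg h IHh|n g IHg] e e' ee' /=.
- by rewrite !(teval_rel_term _ ee'.1).
- by rewrite (IHg _ _ ee').
- by rewrite (IHg _ _ ee') (IHh _ _ ee').
- have ee'a a := encodes_upd n a ee'.
  have inS a : sat T (upd e' n.*2 a) (in_cosets_form n.*2) <-> S a.
    by rewrite sat_in_cosets_form ?odd_double ?S_cosets /upd ?eqxx //; case: (ee'a a).
  split=> [[a [_ [/inS Sa /(IHg _ _ (ee'a a)) Ha]]]|[a [Sa Ha]]]; first by exists a.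
  by exists a; split=> //; split; [apply/inS | apply/(IHg _ _ (ee'a a))].
Qed.

Lemma dp_minimal_in_cosets : dp_minimal T -> dp_minimal S.
Proof.
move=> dpR [phi [psi ICT]]; apply: dpR; exists (rel_form phi), (rel_form psi) => n.
have [b [c [_ [_ Hbc]]]] := ICT n.
exists (encoding \o b), (encoding \o c); split=> //; split=> // i j ilt jlt.
have [a [Sa Ha]] := Hbc i j ilt jlt; exists a; split=> // k klt /=.
rewrite (sat_rel_form _ (encodes_upd 0 a (encodes_encoding (b k)))).
by rewrite (sat_rel_form _ (encodes_upd 0 a (encodes_encoding (c k)))); apply: Ha.
Qed.

End Relativization.

Section DVR.
Variable R : idomainType.
Variable pi : R.
Hypothesis pi_neq0 : pi != 0.
Hypothesis pi_nonunit : pi \isn't a GRing.unit.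
Hypothesis pi_uniformizer :
  forall x : R, x != 0 -> exists u n, u \is a GRing.unit /\ x = u * pi ^+ n.

Lemma expr_uniformizer_inj : injective (fun n : nat => pi ^+ n).
Proof.
have lt_neq a b : (a < b)%N -> pi ^+ a != pi ^+ b.
  move=> ab; rewrite -(subnKC (ltnW ab)) exprD -{1}[pi ^+ a]mulr1.
  rewrite (inj_eq (mulfI (expf_neq0 a pi_neq0))); apply: contra pi_nonunit => /eqP E.
  have ba : (0 < b - a)%N by rewrite subn_gt0.
  by rewrite -(unitrX_pos _ ba) -E unitr1.
by move=> a b /= E; case: (ltngtP a b) => // /lt_neq; rewrite E eqxx.
Qed.

Lemma nonunit_dvd_uniformizer x : x \isn't a GRing.unit -> exists y, x = pi * y.
Proof.
move=> xNU; have [->|x0] := eqVneq x 0; first by exists 0; rewrite mulr0.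
have [u [[|n] [uU Ex]]] := pi_uniformizer x0; first by move: xNU; rewrite Ex mulr1 uU.
by exists (u * pi ^+ n); rewrite Ex exprS; ring.
Qed.

Lemma finite_residue_quotient : finite_residue_field R -> finite_quotient pi.
Proof.
move=> [reps Hreps]; exists reps => x.
have [c creps /nonunit_dvd_uniformizer [y E]] := Hreps x.
by exists c => //; exists y; rewrite -E addrC subrK.
Qed.

Lemma finite_index_contains_power (S : R -> Prop) : is_subring S -> finite_index S ->
  exists k, forall r, S (pi ^+ k * r).
Proof.
move=> HS Sfin; have [z z0 zS] := conductor_neq0 HS expr_uniformizer_inj Sfin.
have [u [k [uU Ez]]] := pi_uniformizer z0.
by exists k => r; rewrite -(mulVKr uU r) mulrCA mulrA -Ez; apply: zS.
Qed.

Lemma ideal_contains_power (S I : R -> Prop) k : (forall r, S (pi ^+ k * r)) ->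
  is_ideal_of S I -> forall x, I x -> x != 0 -> exists m, forall r, I (pi ^+ m * r).
Proof.
move=> kS [_ _ _ IM] x Ix x0; have [v [j [vU Ex]]] := pi_uniformizer x0.
exists (k + j)%N => r; have -> : pi ^+ (k + j) * r = pi ^+ k * (v^-1 * r) * x.
  by rewrite Ex exprD -[LHS]mulr1 -(mulVr vU); ring.
exact: IM.
Qed.

End DVR.

Theorem lemma8p7 (R : idomainType) (S : R -> Prop) :
  mixed_char_dpmin_DVR R -> is_subring S -> finite_index S ->
  dp_minimal S /\ noetherian_sub S.
Proof.
move=> [[pi [pi0 [piNU pi_unif]]] dpR resR] HS Sfin.
have quot m : finite_quotient (pi ^+ m).
  exact/finite_quotientX/(finite_residue_quotient pi_unif).
have [k kS] := finite_index_contains_power pi0 piNU pi_unif HS Sfin.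
split.
  have [L LS HL] := in_cosets_reps S (quot k).
  apply: (dp_minimal_in_cosets (p := pi ^+ k) (L := L)) dpR => x.
  by split=> [/HL // | [l /LS Sl [y ->]]]; apply: subringD.
move=> I HI; have [[x Ix x0]|I0] := classic (exists2 x, I x & x != 0).
  have [m mI] := ideal_contains_power pi_unif kS HI Ix x0.
  exact: fg_ideal_of_contains_principal Sfin (quot m) mI.
apply: (fg_ideal_of0 HS) => x Ix; apply: NNPP => x_neq0.
by apply: I0; exists x => //; apply/eqP.
Qed.
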